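(* Let $d\ge2$ and, for each $N$, let $x_1,\dots,x_N\in\mathbb{R}^d$ be pairwise distinct with real charges $d_1,\dots,d_N$ (not all zero), $M_N=\sum|d_i|$, and $\mu_N=\frac1{M_N}\sum_id_i\delta_{x_i}$. Assume $$\sup_N\Big[\frac1{2M_N^2}\sum_{i=1}^N\sum_{j\ne i}|d_i||d_j|\big(g(x_i-x_j)+|F(x_i-x_j)|\big)+\frac1{M_N}\sum_{i=1}^N|d_i|V(x_i)\Big]<+\infty.$$ Then $(\mu_N)_N$ is tight.
   Context: $g(x)=-\log|x|$ ($d=2$), $g(x)=|x|^{2-d}$ ($d\ge3$). $F\in C^1(\mathbb{R}^d)$ with $F(-x)=F(x)$; $V\in C^1(\mathbb{R}^d)$ bounded from below with $\lim_{|x|\to\infty}(V(x)/2+g(x))=+\infty$. A family of signed measures is tight if for every $\varepsilon>0$ there is a compact $K$ with $\sup_N|\mu_N|(\mathbb{R}^d\setminus K)<\varepsilon$, $|\mu|$ the variation measure. *)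

From HB Require Import structures.
From mathcomp Require Import all_boot all_order all_algebra.
From mathcomp Require Import all_classical all_reals all_analysis.
Set Implicit Arguments. Unset Strict Implicit. Unset Printing Implicit Defensive.
Import Order.TTheory GRing.Theory Num.Theory.
Import numFieldNormedType.Exports.
Local Open Scope classical_set_scope.
Local Open Scope ring_scope.

(* Points of R^d are row vectors 'rV[R]_d (with the product topology). *)

Definition enorm (R : realType) (d : nat) (x : 'rV[R]_d) : R :=
  Num.sqrt (\sum_(i < d) x ord0 i ^+ 2).

Definition gker (R : realType) (d : nat) (x : 'rV[R]_d) : R :=
  if d == 2%N then - ln (enorm x) else (enorm x ^+ (d - 2))^-1.

Definition C1 (R : realType) (d : nat) (f : 'rV[R]_d -> R) : Prop :=
  (forall x, differentiable f x) /\
  (forall i : 'I_d, continuous (fun x => 'D_(delta_mx ord0 i) f x)).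

Definition empmeas (R : realType) (d : nat) (N : nat)
  (x : nat -> 'rV[R]_d) (q : nat -> R) (A : set 'rV[R]_d) : R :=
  (\sum_(i < N) `|q i|)^-1 * \sum_(i < N) q i * \1_A (x i).

Definition tvar (T : Type) (R : realType) (mu : set T -> R) (A : set T)
  : \bar R :=
  ereal_sup [set (\sum_(P <- s) `|mu P|)%:E | s in
    [set s : seq (set T) | (forall P, P \in s -> P `<=` A) /\
      (forall i j, (i < j < size s)%N -> nth set0 s i `&` nth set0 s j = set0)]].

Definition tight (T : topologicalType) (R : realType) (I : set nat)
  (mu : nat -> set T -> R) : Prop :=
  forall eps : R, 0 < eps -> exists K : set T, compact K /\
    (ereal_sup [set tvar (mu N) (~` K) | N in I] < eps%:E)%E.

(* Let h(x, y) = g(x - y) + V(x) + V(y).  Twice the energy of a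
   configuration is the quadratic form sum_{i,j} |d_i| |d_j| L_ij / M_N^2,
   whose entries dominate min (h(x_i, x_j), V(x_i) + V(x_j)).  This floor is
   bounded below by some c and exceeds any A as soon as |x_i| is large: for
   d >= 3 because g >= 0 and V -> +oo, and in the plane because
   -log|x - y| >= -log(2|x|) when |y| <= |x| while V/2 - log|x| -> +oo.
   If a fraction p of the total charge lies outside a large box, the energy
   is therefore at least (c + (A - c) p) / 2, so p <= (2B - c) / (A - c)
   uniformly in N, B being the energy bound. *)

From HB Require Import structures.
From mathcomp Require Import all_boot all_order all_algebra.
From mathcomp Require Import all_classical all_reals all_analysis.
From mathcomp Require Import lra ring.
Import Order.TTheory GRing.Theory Num.Theory.
Import numFieldNormedType.Exports.
Local Open Scope classical_set_scope.
Local Open Scope ring_scope.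
Set Implicit Arguments. Unset Strict Implicit. Unset Printing Implicit Defensive.

Section EuclideanNorm.
Variables (R : realType) (d : nat).
Implicit Types x y : 'rV[R]_d.

Lemma enorm_ge0 x : 0 <= enorm x.
Proof. exact: sqrtr_ge0. Qed.

Lemma enorm_sqr x : enorm x ^+ 2 = \sum_(i < d) x ord0 i ^+ 2.
Proof. by rewrite sqr_sqrtr // sumr_ge0 // => i _; rewrite sqr_ge0. Qed.

Lemma enormN x : enorm (- x) = enorm x.
Proof. by congr Num.sqrt; apply: eq_bigr => i _; rewrite mxE sqrrN. Qed.

Lemma coord_le_enorm x (j : 'I_d) : `|x ord0 j| <= enorm x.
Proof.
rewrite -sqrtr_sqr ler_sqrt; last by rewrite sumr_ge0 // => i _; rewrite sqr_ge0.
by rewrite (bigD1 j) //= lerDl sumr_ge0 // => i _; rewrite sqr_ge0.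
Qed.

Lemma enormB_le x y : enorm y <= enorm x -> enorm (x - y) <= 2 * enorm x.
Proof.
move=> yx; rewrite -ler_sqr ?nnegrE ?mulr_ge0 ?enorm_ge0 //.
apply: (@le_trans _ _ (2 * enorm x ^+ 2 + 2 * enorm y ^+ 2)).
  rewrite !enorm_sqr !mulr_sumr -big_split /=; apply: ler_sum => i _.
  rewrite !mxE; have := sqr_ge0 (x ord0 i + y ord0 i); rewrite !expr2; nra.
have := enorm_ge0 y; nra.
Qed.

Definition box (r : R) : set 'rV[R]_d :=
  [set v | forall j : 'I_d, `[- r, r]%classic (v ord0 j)].

Lemma compact_box r : compact (box r).
Proof.
apply: (@rV_compact _ d (fun => `[- r, r]%classic)) => j.
exact: segment_compact.
Qed.

Lemma enorm_gt_notin_box r x : (~` box r) x -> r < enorm x.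
Proof.
move=> /existsNP[j xj]; apply: lt_le_trans (coord_le_enorm x j).
by rewrite ltNge; apply/negP => xr; apply: xj; rewrite /= in_itv /= -ler_norml.
Qed.

End EuclideanNorm.

Section Kernel.
Variables (R : realType) (d : nat).
Implicit Types x y : 'rV[R]_d.

Lemma gkerN x : gker (- x) = gker x.
Proof. by rewrite /gker enormN. Qed.

Lemma gkerBC x y : gker (y - x) = gker (x - y).
Proof. by rewrite -opprB gkerN. Qed.

Lemma gker2E x : d = 2%N -> gker x = - ln (enorm x).
Proof. by move=> d2; rewrite /gker ifT ?d2. Qed.

Lemma gker_ge0 x : d != 2%N -> 0 <= gker x.
Proof. by rewrite /gker => /negPf ->; rewrite invr_ge0 exprn_ge0 ?enorm_ge0. Qed.

Lemma gker_le1 x : 1 <= enorm x -> gker x <= 1.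
Proof.
rewrite /gker => x1; case: ifP => _.
  by rewrite lerNl (le_trans _ (ln_ge0 x1)) // lerN10.
by rewrite invf_le1 ?exprn_ege1 // exprn_gt0 // (lt_le_trans ltr01).
Qed.

(* [ln 0 = 0], so the case [x = y] is where [1 <= s] is needed. *)
Lemma gker2B_ge x y s : d = 2%N -> enorm y <= enorm x -> enorm x <= s ->
  1 <= s -> - ln (2 * s) <= gker (x - y).
Proof.
move=> d2 yx xs s1; rewrite gker2E // lerN2.
have s0 : 0 < 2 * s by rewrite mulr_gt0 // (lt_le_trans ltr01).
have [xy0|xy0] := leP (enorm (x - y)) 0.
  by rewrite ln0 // ln_ge0 //; lra.
rewrite ler_ln ?posrE //; apply: (le_trans (enormB_le yx)).
by rewrite ler_pM2l.
Qed.

End Kernel.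

Section PairEnergy.
Variables (R : realType) (d : nat) (V : 'rV[R]_d -> R) (m : R).
Hypothesis V_ge : forall y, m <= V y.
Hypothesis V_gker_coercive :
  forall A : R, exists r : R, forall y, r < enorm y -> A < V y / 2 + gker y.
Implicit Types x y : 'rV[R]_d.

Definition pair_energy x y := gker (x - y) + V x + V y.

(* Bounds both the off-diagonal terms [pair_energy x_i x_j + |F (x_i - x_j)|]
   and the diagonal terms [2 V x_i] of the doubled discrete energy. *)
Definition pair_floor x y := Num.min (pair_energy x y) (V x + V y).

Lemma pair_energyC x y : pair_energy x y = pair_energy y x.
Proof. by rewrite /pair_energy gkerBC; lra. Qed.

Lemma V_coercive A : exists r, forall y, r < enorm y -> A <= V y.
Proof.
have [r Vr] := V_gker_coercive (A / 2 + 1); exists (Num.max r 1) => y.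
rewrite gt_max => /andP[ry y1].
by have := Vr _ ry; have := gker_le1 (ltW y1); lra.
Qed.

Lemma pair_energy_bounded_below : exists c, forall x y, c <= pair_energy x y.
Proof.
have [d2|d2] := eqVneq d 2%N; last first.
  exists (m + m) => x y; rewrite /pair_energy.
  by have := gker_ge0 (x - y) d2; have := V_ge x; have := V_ge y; lra.
have [r Vr] := V_gker_coercive 0; pose s := Num.max 1 r.
have s1 : 1 <= s by rewrite le_max lexx.
exists (Num.min (- ln (2 * s) + (m + m)) (- ln 2 + (m + m / 2))).
suff: forall x y, enorm y <= enorm x ->
    Num.min (- ln (2 * s) + (m + m)) (- ln 2 + (m + m / 2)) <= pair_energy x y.
  move=> H x y; have [/H //|/ltW /H] := leP (enorm y) (enorm x).
  by rewrite pair_energyC.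
move=> x y yx; rewrite ge_min /pair_energy.
have [xs|sx] := leP (enorm x) s.
  have := gker2B_ge d2 yx xs s1; have := V_ge x; have := V_ge y; lra.
have x0 : 0 < enorm x by rewrite (lt_le_trans ltr01) // (le_trans s1) // ltW.
have := gker2B_ge d2 yx (lexx _) (ltW (le_lt_trans s1 sx)).
rewrite lnM ?posrE //.
have rs : r <= s by rewrite le_max lexx orbT.
have := Vr x (le_lt_trans rs sx); rewrite gker2E //.
have := V_ge x; have := V_ge y; lra.
Qed.

Lemma pair_energy_coercive A :
  exists r, forall x y, r < enorm x -> A <= pair_energy x y.
Proof.
have [d2|d2] := eqVneq d 2%N; last first.
  have [r Vr] := V_coercive (A - m); exists r => x y rx; rewrite /pair_energy.
  by have := gker_ge0 (x - y) d2; have := Vr x rx; have := V_ge y; lra.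
have [r Vr] := V_gker_coercive (A + ln 2 - (m + m / 2)); pose s := Num.max r 1.
exists s.
suff: forall x y, enorm y <= enorm x -> s < enorm x -> A <= pair_energy x y.
  move=> H x y sx; have [yx|/ltW xy] := leP (enorm y) (enorm x); first exact: H.
  by rewrite pair_energyC; apply: H => //; apply: lt_le_trans xy.
move=> x y yx; rewrite gt_max => /andP[rx x1].
have x0 : 0 < enorm x by rewrite (lt_trans ltr01).
have := gker2B_ge d2 yx (lexx _) (ltW x1); rewrite lnM ?posrE //.
have := Vr x rx; rewrite gker2E // /pair_energy.
by have := V_ge x; have := V_ge y; lra.
Qed.

Lemma pair_floor_bounded_below : exists c, forall x y, c <= pair_floor x y.
Proof.
have [c hc] := pair_energy_bounded_below.
exists (Num.min c (m + m)) => x y; rewrite /pair_floor le_min !ge_min hc /=.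
by have := V_ge x; have := V_ge y; rewrite orbC; lra.
Qed.

Lemma pair_floor_coercive A :
  exists r, forall x y, r < enorm x -> A <= pair_floor x y.
Proof.
have [r1 h1] := pair_energy_coercive A; have [r2 h2] := V_coercive (A - m).
exists (Num.max r1 r2) => x y; rewrite gt_max => /andP[r1x r2x].
by rewrite /pair_floor le_min h1 //=; have := h2 x r2x; have := V_ge y; lra.
Qed.

End PairEnergy.

Section QuadraticForms.
Variables (R : realFieldType) (n : nat) (a : 'I_n -> R).

Lemma double_energyE (G : 'I_n -> 'I_n -> R) (W : 'I_n -> R) :
  0 < \sum_(i < n) a i ->
  2 * (\sum_(i < n) a i) ^+ 2 *
    ((2 * (\sum_(i < n) a i) ^+ 2)^-1 *
       (\sum_(i < n) \sum_(j < n | j != i) a i * a j * G i j)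
     + (\sum_(i < n) a i)^-1 * \sum_(i < n) a i * W i)
  = \sum_(i < n) \sum_(j < n)
      a i * a j * ((if j != i then G i j else 0) + W i + W j).
Proof.
set M := \sum_(i < n) a i => M0.
have -> : \sum_(i < n) \sum_(j < n)
      a i * a j * ((if j != i then G i j else 0) + W i + W j)
    = \sum_(i < n) \sum_(j < n | j != i) a i * a j * G i j
      + (\sum_(i < n) a i * W i) * M + M * \sum_(i < n) a i * W i.
  rewrite {2}/M !mulr_suml -!big_split /=; apply: eq_bigr => i _.
  rewrite (big_mkcond (fun j => j != i)) /= /M !mulr_sumr -!big_split /=.
  by apply: eq_bigr => j _; case: ifP => _ /=; ring.
by rewrite /M; field; exact: lt0r_neq0.
Qed.

Lemma quadratic_form_ge (L : 'I_n -> 'I_n -> R) (O : pred 'I_n) c A :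
  (forall i, 0 <= a i) -> (forall i j, c <= L i j) ->
  (forall i j, O i -> A <= L i j) ->
  (c * \sum_(i < n) a i + (A - c) * \sum_(i < n | O i) a i) * \sum_(i < n) a i
  <= \sum_(i < n) \sum_(j < n) a i * a j * L i j.
Proof.
move=> a_ge0 L_ge L_geO.
have L_ge_step i j : a i * a j * (c + (O i)%:R * (A - c)) <= a i * a j * L i j.
  rewrite ler_wpM2l ?mulr_ge0 //; case Oi: (O i); last by rewrite mul0r addr0.
  by have := L_geO i j Oi; rewrite mul1r; lra.
apply: le_trans (ler_sum _ (fun i _ => ler_sum _ (fun j _ => L_ge_step i j))).
rewrite [X in _ <= X](_ : _ = (\sum_(i < n) a i * (c + (O i)%:R * (A - c)))
    * \sum_(i < n) a i); last first.
  by rewrite mulr_suml; apply: eq_bigr => i _; rewrite mulr_sumr;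
    apply: eq_bigr => j _; ring.
rewrite [\sum_(i < n | O i) _]big_mkcond /= !mulr_sumr -big_split /=.
apply: ler_sum => i _; rewrite ler_wpM2r // le_eqVlt; apply/orP; left.
by apply/eqP/eq_bigr => j _; case: (O j) => /=; ring.
Qed.

End QuadraticForms.

Section DiscreteEnergy.
Variables (R : realType) (d : nat) (F V : 'rV[R]_d -> R).

Definition config_energy N (x : nat -> 'rV[R]_d) (q : nat -> R) : R :=
  (2 * (\sum_(i < N) `|q i|) ^+ 2)^-1 *
    (\sum_(i < N) \sum_(j < N | j != i)
       `|q i| * `|q j| * (gker (x i - x j) + `|F (x i - x j)|))
  + (\sum_(i < N) `|q i|)^-1 * \sum_(i < N) `|q i| * V (x i).

Lemma outer_charge_le N (x : nat -> 'rV[R]_d) (q : nat -> R) (B c A : R)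
    (O : set 'rV[R]_d) :
  0 < \sum_(i < N) `|q i| -> config_energy N x q <= B ->
  (forall y z, c <= pair_floor V y z) ->
  (forall y z, O y -> A <= pair_floor V y z) ->
  (A - c) * \sum_(i < N | x i \in O) `|q i|
  <= (2 * B - c) * \sum_(i < N) `|q i|.
Proof.
set M := \sum_(i < N) `|q i|; set P := \sum_(i < N | _) _ => M0 EB c_le A_le.
pose L (i j : 'I_N) :=
  (if j != i then gker (x i - x j) + `|F (x i - x j)| else 0) + V (x i) + V (x j).
have floor_le (i j : 'I_N) : pair_floor V (x i) (x j) <= L i j.
  rewrite /L /pair_floor; case: ifP => [_|/negbFE/eqP ->].
    by rewrite ge_min /pair_energy; have := normr_ge0 (F (x i - x j)); lra.
  by rewrite ge_min add0r lexx orbT.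
have := quadratic_form_ge (L := L) (O := fun i => x i \in O) (c := c) (A := A)
  (fun i => normr_ge0 (q i)) (fun i j => le_trans (c_le _ _) (floor_le i j))
  (fun i j Oi => le_trans (A_le _ _ (set_mem Oi)) (floor_le i j)).
rewrite -double_energyE // -/M -/P => QM.
have : (c * M + (A - c) * P) * M <= 2 * M ^+ 2 * B.
  by apply: le_trans QM _; rewrite ler_wpM2l // mulr_ge0 // exprn_ge0 // ltW.
rewrite [2 * _ * B](_ : _ = (c * M + (2 * B - c) * M) * M); last by ring.
by rewrite ler_pM2r // lerD2l.
Qed.

End DiscreteEnergy.

Lemma sum_indic_disjoint_le (T : Type) (R : numDomainType) (s : seq (set T))
    (A : set T) (y : T) :
  (forall P, P \in s -> P `<=` A) ->
  (forall i j, (i < j < size s)%N -> nth set0 s i `&` nth set0 s j = set0) ->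
  \sum_(P <- s) (\1_P y : R) <= \1_A y.
Proof.
elim: s => [|P s IHs] sA s_disj; first by rewrite big_nil indicE ler0n.
rewrite big_cons indicE; have [yP|yP] := boolP (y \in P); last first.
  rewrite add0r IHs // => [Q Qs|i j ij]; first by apply: sA; rewrite inE Qs orbT.
  exact: (s_disj i.+1 j.+1).
rewrite big1_seq => [|Q /andP[_ Qs]].
  rewrite addr0 indicE mem_set //; apply: (sA P (mem_head P s)).
  by rewrite -in_setE.
rewrite indicE; apply/eqP; rewrite pnatr_eq0 eqb0; apply/negP => yQ.
have PQ : P `&` Q = set0.
  have := s_disj 0%N (index Q s).+1.
  by rewrite /= nth_index // ltnS index_mem; apply.
have : (P `&` Q) y by split; rewrite -in_setE.
by rewrite PQ.
Qed.

Lemma tvar_empmeas_le (R : realType) d N (x : nat -> 'rV[R]_d) (q : nat -> R)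
    (A : set 'rV[R]_d) :
  0 < \sum_(i < N) `|q i| ->
  (tvar (empmeas N x q) A <=
    ((\sum_(i < N) `|q i|)^-1 * \sum_(i < N | x i \in A) `|q i|)%:E)%E.
Proof.
set M := \sum_(i < N) `|q i| => M0.
have M1_ge0 : 0 <= M^-1 by rewrite invr_ge0 ltW.
apply: ge_ereal_sup => _ [s [sA s_disj] <-]; rewrite lee_fin.
apply: (@le_trans _ _ (\sum_(P <- s) M^-1 * \sum_(i < N) `|q i| * \1_P (x i))).
  apply: ler_sum => P _; rewrite normrM ger0_norm // ler_wpM2l //.
  apply: (le_trans (ler_norm_sum _ _ _)); apply: ler_sum => i _.
  by rewrite normrM [`|\1_P _|]ger0_norm.
rewrite -mulr_sumr ler_wpM2l // exchange_big [X in _ <= X]big_mkcond /=.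
apply: ler_sum => i _.
have := sum_indic_disjoint_le R (x i) sA s_disj.
rewrite -mulr_sumr => /(ler_wpM2l (normr_ge0 (q i)))/le_trans; apply.
by rewrite indicE; case: (_ \in _); rewrite ?mulr1 ?mulr0.
Qed.

Lemma ereal_sup_lt_pinfty_ub (R : realType) (S : set \bar R) :
  (ereal_sup S < +oo)%E -> exists B : R, forall e, S e -> (e <= B%:E)%E.
Proof.
move=> Sy; exists (fine (ereal_sup S)) => e /ereal_sup_ubound.
by case: (ereal_sup S) Sy => [r| |] //= _ /le_trans; apply; rewrite leNye.
Qed.

Theorem lemma3p1 (R : realType) (d : nat) (F V : 'rV[R]_d -> R)
  (x : nat -> nat -> 'rV[R]_d) (q : nat -> nat -> R) :
  (2 <= d)%N ->
  C1 F -> (forall y, F (- y) = F y) ->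
  C1 V -> (exists m : R, forall y, m <= V y) ->
  (forall A : R, exists r : R, forall y, r < enorm y -> A < V y / 2 + gker y) ->
  (* configurations: for each N >= 1, pairwise distinct points, charges not all zero *)
  (forall N i j, (i < N)%N -> (j < N)%N -> i <> j -> x N i <> x N j) ->
  (forall N, (0 < N)%N -> exists i, (i < N)%N /\ q N i <> 0) ->
  (ereal_sup [set ((2 * (\sum_(i < N) `|q N i|) ^+ 2)^-1 *
        (\sum_(i < N) \sum_(j < N | j != i)
            `|q N i| * `|q N j| * (gker (x N i - x N j) + `|F (x N i - x N j)|))
      + (\sum_(i < N) `|q N i|)^-1 * \sum_(i < N) `|q N i| * V (x N i))%:E
      | N in [set N | (0 < N)%N]] < +oo)%E ->
  tight [set N | (0 < N)%N] (fun N => empmeas N (x N) (q N)).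
Proof.
move=> _ _ _ _ [m V_ge] V_gker_coercive _ q_nz /ereal_sup_lt_pinfty_ub[B E_le].
have energy_le N : (0 < N)%N -> config_energy F V N (x N) (q N) <= B.
  by move=> N0; rewrite -lee_fin; apply: E_le; exists N.
have mass_gt0 N : (0 < N)%N -> 0 < \sum_(i < N) `|q N i|.
  move=> /q_nz[i [iN qi]]; rewrite (bigD1 (Ordinal iN)) //= ltr_pwDl ?sumr_ge0 //.
  by rewrite normr_gt0; apply/eqP.
move=> eps eps0.
have [c c_le] := pair_floor_bounded_below V_ge V_gker_coercive.
pose D := 2 * B - c; pose K := 2 * (`|D| + 1) / eps.
have K0 : 0 < K by rewrite divr_gt0 // mulr_gt0 // ltr_pwDr.
have [r A_le] := pair_floor_coercive V_ge V_gker_coercive (c + K).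
exists (box r); split; first exact: compact_box.
apply: (@le_lt_trans _ _ (eps / 2)%:E); last by rewrite lte_fin; lra.
apply: ge_ereal_sup => _ [N N0 <-].
apply: le_trans (tvar_empmeas_le (x N) (~` box r) (mass_gt0 N N0)) _.
have := outer_charge_le (O := ~` box r) (mass_gt0 N N0) (energy_le N N0) c_le
  (fun y z yr => A_le y z (enorm_gt_notin_box yr)).
rewrite lee_fin addrAC subrr add0r -/D => KP.
rewrite mulrC ler_pdivrMr ?mass_gt0 // -(ler_pM2l K0) mulrA.
rewrite [K * (eps / 2)](_ : _ = `|D| + 1); last first.
  by rewrite /K; field; exact: lt0r_neq0.
apply: le_trans KP _; rewrite ler_wpM2r ?ltW ?mass_gt0 //.
by have := ler_norm D; lra.
Qed.
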